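(* For $n\ge 1$ let $\gamma_n$ be the unique closed geodesic on the modular surface $\Sigma_{\mathrm{Mod}}$ lifting to the geodesic $1/n$ on the once-punctured torus $\Sigma_{1,1}$ (under the 6-fold cover $\Sigma_{1,1}\to\Sigma_{\mathrm{Mod}}$). For $\Gamma_n:=\{\gamma_i\}_{i=1}^n$, the total length satisfies $\ell(\Gamma_n)\asymp n^2$.
   Context: $\Sigma_{\mathrm{Mod}}=\mathbb{H}^2/\mathrm{PSL}(2,\mathbb{Z})$ with its hyperbolic metric; $\Sigma_{1,1}$ is the once-punctured torus with the pulled-back metric, and $1/n$ denotes the closed geodesic in the free homotopy class of the simple closed curve of slope $1/n$. $\ell(\Gamma_n)=\sum_{i=1}^n\ell(\gamma_i)$. $f(n)\asymp g(n)$ means there are constants $A>0,B,C>0,D$ with $Ag(n)+B\le f(n)\le Cg(n)+D$ for all $n$. *)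

From Stdlib Require Import Reals ZArith Lra.
From Coquelicot Require Import Coquelicot.
Open Scope R_scope.

Record M2 := mkM2 { m11 : Z; m12 : Z; m21 : Z; m22 : Z }.

Definition M2mul (A B : M2) : M2 :=
  mkM2 (m11 A * m11 B + m12 A * m21 B)%Z (m11 A * m12 B + m12 A * m22 B)%Z
       (m21 A * m11 B + m22 A * m21 B)%Z (m21 A * m12 B + m22 A * m22 B)%Z.

Definition M2id : M2 := mkM2 1 0 0 1.
Definition M2neg (A : M2) : M2 := mkM2 (- m11 A) (- m12 A) (- m21 A) (- m22 A).

Fixpoint M2pow (A : M2) (k : nat) : M2 :=
  match k with O => M2id | S k' => M2mul A (M2pow A k') end.

Definition M2det (A : M2) : Z := (m11 A * m22 A - m12 A * m21 A)%Z.

Definition inSL2Z (A : M2) : Prop := M2det A = 1%Z.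

(* Equality in PSL(2,Z) = SL(2,Z)/{+-1}. *)
Definition PSLeq (A B : M2) : Prop := A = B \/ A = M2neg B.

(* Hyperbolic plane: upper half-plane, points (x,y) with y > 0. *)
Definition arcosh (t : R) : R := ln (t + sqrt (t * t - 1)).

Definition hdist (x1 y1 x2 y2 : R) : R :=
  arcosh (1 + ((x1 - x2)^2 + (y1 - y2)^2) / (2 * y1 * y2)).

(* Moebius action z |-> (a z + b)/(c z + d) of a real matrix with det 1,
   z = x + i y. *)
Definition mob_den (g : M2) (x y : R) : R :=
  (IZR (m21 g) * x + IZR (m22 g))^2 + (IZR (m21 g) * y)^2.
Definition mob_x (g : M2) (x y : R) : R :=
  ((IZR (m11 g) * x + IZR (m12 g)) * (IZR (m21 g) * x + IZR (m22 g))
    + IZR (m11 g) * IZR (m21 g) * y^2) / mob_den g x y.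
Definition mob_y (g : M2) (x y : R) : R :=
  IZR (M2det g) * y / mob_den g x y.

(* For a hyperbolic
   g in PSL(2,Z) this is the length of the closed geodesic on the modular
   surface in the free homotopy class / conjugacy class of g. *)
Definition tlen (g : M2) : R :=
  real (Glb_Rbar (fun t => exists x y, 0 < y /\
                        t = hdist x y (mob_x g x y) (mob_y g x y))).

(* Standard free generators of the commutator subgroup Gamma' of PSL(2,Z),
   Gamma' = pi_1(Sigma_{1,1}) (the modular torus). *)
Definition gen_a : M2 := mkM2 1 1 1 2.
Definition gen_b : M2 := mkM2 1 (-1) (-1) 2.

(* Element of pi_1(Sigma_{1,1}) representing the simple closed curve of
   slope 1/n, i.e. homology class n*a + 1*b: the word a^n b. *)
Definition slope_word (n : nat) : M2 := M2mul (M2pow gen_a n) gen_b.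

Definition PSL_primitive (g : M2) : Prop :=
  inSL2Z g /\
  ~ (exists (h : M2) (k : nat), inSL2Z h /\ (2 <= k)%nat /\ PSLeq g (M2pow h k)).

(* g represents the (primitive) closed geodesic on the modular surface
   lifting to the geodesic 1/n on Sigma_{1,1}: g is primitive in PSL(2,Z)
   and a positive power of g equals the slope-1/n element (in PSL(2,Z)). *)
Definition gamma_rep (n : nat) (g : M2) : Prop :=
  PSL_primitive g /\ exists k : nat, (1 <= k)%nat /\ PSLeq (M2pow g k) (slope_word n).

Fixpoint total_length (g : nat -> M2) (n : nat) : R :=
  match n with
  | O => 0
  | S n' => total_length g n' + tlen (g (S n'))
  end.

(* For g in SL(2,Z) with |tr g| >= 2 the translation length lies
   between ln (tr^2 g / 4), because cosh d(z, g z) >= tr^2 g / 2 - 1 for every z,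
   and ln (a^2 + b^2 + c^2 + d^2) = ln (2 cosh d(i, g i)).  A representative of
   gamma_n is, up to sign, the slope word a^n b itself: a k-th power
   u_k g - u_(k-1) (Chebyshev values u_k) of a hyperbolic g with k >= 2 has both
   off-diagonal entries divisible by u_k, |u_k| >= 3, whereas the off-diagonal
   entries 2q - p and -p of a^n b satisfy (2q - p)^2 - 5 p^2 = -4.  The trace of
   a^n b is 3p with 2^(n-1) <= p <= 3^n, so l(gamma_n) is squeezed between two
   affine functions of n, and summing gives n^2. *)

From Stdlib Require Import Reals ZArith Lra Lia Psatz.
From Coquelicot Require Import Coquelicot.
Open Scope R_scope.

Definition M2trace (A : M2) : Z := (m11 A + m22 A)%Z.

Definition M2norm2 (A : M2) : Z :=
  (m11 A * m11 A + m12 A * m12 A + m21 A * m21 A + m22 A * m22 A)%Z.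

Lemma Glb_Rbar_real_bounds (E : R -> Prop) (m M t0 : R) :
  E t0 -> t0 <= M -> (forall t, E t -> m <= t) -> m <= real (Glb_Rbar E) <= M.
Proof.
  intros Et0 Ht0 Hm.
  destruct (Glb_Rbar_correct E) as [Hlb Hglb].
  assert (Hle := Hlb t0 Et0).
  assert (Hge : Rbar_le m (Glb_Rbar E)) by (apply Hglb; exact Hm).
  destruct (Glb_Rbar E); simpl in *; try contradiction; lra.
Qed.

Lemma ln_gt_0 x : 1 < x -> 0 < ln x.
Proof. intro Hx. rewrite <- ln_1. apply ln_increasing; lra. Qed.

Lemma ln_le_arcosh u : 1 <= u -> ln u <= arcosh u.
Proof.
  intro Hu. unfold arcosh. apply ln_le; [lra|].
  pose proof (sqrt_pos (u * u - 1)). lra.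
Qed.

Lemma arcosh_le_ln_double u : 1 <= u -> arcosh u <= ln (2 * u).
Proof.
  intro Hu. unfold arcosh. pose proof (sqrt_pos (u * u - 1)).
  apply ln_le; [lra|].
  assert (sqrt (u * u - 1) <= sqrt (u * u)) by (apply sqrt_le_1_alt; lra).
  rewrite sqrt_square in * by lra. lra.
Qed.

(* |c z^2 + (d - a) z - b|^2 >= (Im z)^2 ((a + d)^2 - 4) for z = x + i y; when
   c <> 0, 16 c^2 times the difference is a perfect square. *)
Lemma fixpoint_quadratic_norm_ge (a b c d x y : R) : a * d - b * c = 1 ->
  y ^ 2 * ((a + d) ^ 2 - 4) <=
  (c * (x ^ 2 - y ^ 2) + (d - a) * x - b) ^ 2 + (y * (2 * c * x + d - a)) ^ 2.
Proof.
  intro Hdet.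
  replace ((a + d) ^ 2 - 4) with ((d - a) ^ 2 + 4 * b * c) by nra.
  destruct (Req_dec c 0) as [Hc | Hc].
  - subst c. pose proof (pow2_ge_0 ((d - a) * x - b)). nra.
  - set (u := 2 * c * x + d - a).
    set (D := (d - a) ^ 2 + 4 * b * c).
    assert (Hsq : 16 * c ^ 2 * ((c * (x ^ 2 - y ^ 2) + (d - a) * x - b) ^ 2
                                + (y * u) ^ 2 - y ^ 2 * D)
                  = (u ^ 2 - D + 4 * c ^ 2 * y ^ 2) ^ 2)
      by (unfold u, D; ring).
    assert (0 < 16 * c ^ 2) by (pose proof (pow2_gt_0 c Hc); lra).
    pose proof (pow2_ge_0 (u ^ 2 - D + 4 * c ^ 2 * y ^ 2)).
    nra.
Qed.

Lemma IZR_M2det (A : M2) :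
  IZR (M2det A) = IZR (m11 A) * IZR (m22 A) - IZR (m12 A) * IZR (m21 A).
Proof. unfold M2det. rewrite minus_IZR, !mult_IZR. reflexivity. Qed.

Lemma mob_den_pos G x y : inSL2Z G -> 0 < y -> 0 < mob_den G x y.
Proof.
  intros HG Hy. apply (f_equal IZR) in HG. rewrite IZR_M2det in HG.
  unfold mob_den.
  set (a := IZR (m11 G)) in *. set (b := IZR (m12 G)) in *.
  set (c := IZR (m21 G)) in *. set (d := IZR (m22 G)) in *.
  destruct (Req_dec c 0) as [Hc | Hc].
  - rewrite Hc in *. assert (d <> 0) by (intros ->; lra).
    pose proof (pow2_gt_0 d). nra.
  - pose proof (pow2_ge_0 (c * x + d)).
    assert (0 < (c * y) ^ 2) by (apply pow2_gt_0; nra). lra.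
Qed.

Definition cosh_hdist (x1 y1 x2 y2 : R) : R :=
  1 + ((x1 - x2) ^ 2 + (y1 - y2) ^ 2) / (2 * y1 * y2).

(* Uses g z - z = - (c z^2 + (d - a) z - b) / (c z + d) and
   Im (g z) = y / |c z + d|^2. *)
Lemma cosh_hdist_moebius G x y : inSL2Z G -> 0 < y ->
  cosh_hdist x y (mob_x G x y) (mob_y G x y) =
  1 + ((IZR (m21 G) * (x ^ 2 - y ^ 2) + (IZR (m22 G) - IZR (m11 G)) * x - IZR (m12 G)) ^ 2
       + (y * (2 * IZR (m21 G) * x + IZR (m22 G) - IZR (m11 G))) ^ 2) / (2 * y ^ 2).
Proof.
  intros HG Hy. pose proof (mob_den_pos G x y HG Hy) as Hden.
  unfold cosh_hdist, mob_x, mob_y, mob_den in *. rewrite IZR_M2det.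
  apply (f_equal IZR) in HG. rewrite IZR_M2det in HG.
  set (a := IZR (m11 G)) in *. set (b := IZR (m12 G)) in *.
  set (c := IZR (m21 G)) in *. set (d := IZR (m22 G)) in *.
  set (den := (c * x + d) ^ 2 + (c * y) ^ 2) in *.
  assert (Hdisp : (x - ((a * x + b) * (c * x + d) + a * c * y ^ 2) / den) ^ 2
                  + (y - (a * d - b * c) * y / den) ^ 2
                  = ((c * (x ^ 2 - y ^ 2) + (d - a) * x - b) ^ 2
                     + (y * (2 * c * x + d - a)) ^ 2) / den)
    by (unfold den; field; unfold den in Hden; lra).
  rewrite Hdisp, HG. field. split; lra.
Qed.

Lemma cosh_hdist_moebius_ge G x y : inSL2Z G -> 0 < y ->
  IZR (M2trace G) ^ 2 / 2 - 1 <= cosh_hdist x y (mob_x G x y) (mob_y G x y).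
Proof.
  intros HG Hy. rewrite (cosh_hdist_moebius G x y HG Hy).
  unfold M2trace. apply (f_equal IZR) in HG. rewrite IZR_M2det in HG.
  rewrite plus_IZR.
  pose proof (fixpoint_quadratic_norm_ge _ _ _ _ x y HG) as Hfix.
  set (P := _ ^ 2 + _ ^ 2) in *. clearbody P.
  assert (0 < 2 * y ^ 2) by nra.
  apply (Rmult_le_reg_r (2 * y ^ 2)); [lra|].
  field_simplify; nra.
Qed.

Lemma cosh_hdist_moebius_i G : inSL2Z G ->
  cosh_hdist 0 1 (mob_x G 0 1) (mob_y G 0 1) = IZR (M2norm2 G) / 2.
Proof.
  intro HG. rewrite (cosh_hdist_moebius G 0 1 HG Rlt_0_1).
  unfold M2norm2. apply (f_equal IZR) in HG. rewrite IZR_M2det in HG.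
  rewrite !plus_IZR, !mult_IZR. lra.
Qed.

Lemma M2norm2_ge_2 G : inSL2Z G -> (2 <= M2norm2 G)%Z.
Proof. unfold inSL2Z, M2det, M2norm2. nia. Qed.

Lemma tlen_bounds G : inSL2Z G -> 4 <= IZR (M2trace G) ^ 2 ->
  ln (IZR (M2trace G) ^ 2 / 4) <= tlen G <= ln (IZR (M2norm2 G)).
Proof.
  intros HG Htr. unfold tlen.
  apply (Glb_Rbar_real_bounds _ _ _ (hdist 0 1 (mob_x G 0 1) (mob_y G 0 1))).
  - exists 0, 1. split; [lra | reflexivity].
  - unfold hdist. fold (cosh_hdist 0 1 (mob_x G 0 1) (mob_y G 0 1)).
    rewrite cosh_hdist_moebius_i by exact HG.
    replace (IZR (M2norm2 G)) with (2 * (IZR (M2norm2 G) / 2)) at 2 by field.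
    apply arcosh_le_ln_double.
    pose proof (IZR_le _ _ (M2norm2_ge_2 G HG)). lra.
  - intros t (x & y & Hy & ->). unfold hdist.
    fold (cosh_hdist x y (mob_x G x y) (mob_y G x y)).
    pose proof (cosh_hdist_moebius_ge G x y HG Hy).
    eapply Rle_trans; [| apply ln_le_arcosh; lra].
    apply ln_le; lra.
Qed.

Open Scope Z_scope.

Fixpoint chebU (t : Z) (k : nat) : Z :=
  match k with
  | O => 0
  | S O => 1
  | S (S k' as k1) => t * chebU t k1 - chebU t k'
  end.

Lemma chebU_SS t k : chebU t (S (S k)) = t * chebU t (S k) - chebU t k.
Proof. reflexivity. Qed.

Lemma chebU_cassini t k :
  chebU t (S k) * chebU t (S k) - t * chebU t (S k) * chebU t k + chebU t k * chebU t k = 1.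
Proof.
  induction k as [|k IH]; [cbn [chebU]; ring|].
  rewrite chebU_SS. nia.
Qed.

Lemma chebU_abs_lt_succ t k : 3 <= Z.abs t -> Z.abs (chebU t k) < Z.abs (chebU t (S k)).
Proof.
  intro Ht. induction k as [|k IH]; [reflexivity|].
  rewrite chebU_SS.
  pose proof (Z.abs_mul t (chebU t (S k))).
  pose proof (Z.abs_triangle (t * chebU t (S k)) (- chebU t k)).
  nia.
Qed.

Lemma chebU_abs_ge t k : 3 <= Z.abs t -> (2 <= k)%nat -> Z.abs t <= Z.abs (chebU t k).
Proof.
  intros Ht Hk. induction Hk as [|k Hk IH].
  - rewrite chebU_SS. simpl. lia.
  - pose proof (chebU_abs_lt_succ t k Ht). lia.
Qed.

Lemma M2pow_1 G : M2pow G 1 = G.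
Proof. destruct G. unfold M2pow, M2mul, M2id. cbn. f_equal; ring. Qed.

(* Cayley-Hamilton: G^2 = tr(G) G - 1 in SL(2,Z). *)
Lemma M2pow_chebU G k : inSL2Z G ->
  let u := chebU (M2trace G) (S k) in let v := chebU (M2trace G) k in
  M2pow G (S k) = mkM2 (u * m11 G - v) (u * m12 G) (u * m21 G) (u * m22 G - v).
Proof.
  intros HG. unfold inSL2Z, M2det, M2trace in HG |- *.
  destruct G as [a b c d]. cbn [m11 m12 m21 m22] in *.
  induction k as [|k IH]; cbv zeta in *.
  - rewrite M2pow_1. cbn [chebU]. f_equal; ring.
  - change (M2pow (mkM2 a b c d) (S (S k)))
      with (M2mul (mkM2 a b c d) (M2pow (mkM2 a b c d) (S k))).
    rewrite IH, chebU_SS.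
    set (u := chebU (a + d) (S k)). set (v := chebU (a + d) k).
    assert (Hu : u * (a * d - b * c) = u) by (rewrite HG; ring).
    unfold M2mul. cbn [m11 m12 m21 m22]. f_equal; nia.
Qed.

Lemma PSLeq_sign A B : PSLeq A B -> exists s, s * s = 1 /\
  m11 A = s * m11 B /\ m12 A = s * m12 B /\ m21 A = s * m21 B /\ m22 A = s * m22 B.
Proof.
  intros [-> | ->]; [exists 1 | exists (-1)]; cbn [M2neg m11 m12 m21 m22];
    repeat split; ring.
Qed.

Lemma PSLeq_pow_root G W k : inSL2Z G -> (1 <= k)%nat -> PSLeq (M2pow G k) W ->
  2 < Z.abs (M2trace W) ->
  (forall u, (u | m12 W) -> (u | m21 W) -> Z.abs u <= 2) ->
  PSLeq G W.
Proof.
  intros HG Hk HW HtrW Hdiv.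
  destruct k as [|[|k]]; [lia | rewrite M2pow_1 in HW; exact HW |].
  exfalso.
  destruct (PSLeq_sign _ _ HW) as (s & Hs & E11 & E12 & E21 & E22).
  rewrite (M2pow_chebU G (S k) HG) in E11, E12, E21, E22.
  cbn [m11 m12 m21 m22] in E11, E12, E21, E22.
  pose proof (chebU_cassini (M2trace G) (S k)) as Hcas.
  set (t := M2trace G) in *.
  set (u := chebU t (S (S k))) in *. set (v := chebU t (S k)) in *.
  assert (Hdisc : (t * t - 4) * (u * u) = M2trace W * M2trace W - 4).
  { assert (Htr : s * M2trace W = t * u - 2 * v) by (unfold t, M2trace in *; lia).
    nia. }
  assert (Ht : 3 <= Z.abs t).
  { assert (9 <= M2trace W * M2trace W) by nia.
    assert (5 <= t * t) by nia.
    nia. }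
  assert (Hu : Z.abs u <= 2).
  { apply Hdiv.
    - exists (s * m12 G). transitivity (s * (u * m12 G)); [|ring].
      rewrite E12, Z.mul_assoc, Hs. ring.
    - exists (s * m21 G). transitivity (s * (u * m21 G)); [|ring].
      rewrite E21, Z.mul_assoc, Hs. ring. }
  pose proof (chebU_abs_ge t (S (S k)) Ht ltac:(lia)).
  lia.
Qed.

Lemma M2pow_gen_a n : exists p q, M2pow gen_a n = mkM2 p q q (p + q) /\
  1 <= p /\ 0 <= q <= 2 * p /\ p * p + p * q - q * q = 1 /\
  2 ^ Z.of_nat n <= 2 * p /\ 2 ^ Z.of_nat n <= p + q /\ p <= 3 ^ Z.of_nat n.
Proof.
  induction n as [|n (p & q & Hpow & Hp)].
  - exists 1, 0. split; [reflexivity | cbn; lia].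
  - exists (p + q), (p + 2 * q). split.
    + change (M2pow gen_a (S n)) with (M2mul gen_a (M2pow gen_a n)).
      rewrite Hpow. unfold M2mul, gen_a. cbn [m11 m12 m21 m22]. f_equal; ring.
    + rewrite Nat2Z.inj_succ, !Z.pow_succ_r by lia. nia.
Qed.

Lemma slope_word_entries n : exists p q,
  slope_word n = mkM2 (p - q) (2 * q - p) (- p) (2 * p + q) /\
  1 <= p /\ 0 <= q <= 2 * p /\ p * p + p * q - q * q = 1 /\
  2 ^ Z.of_nat n <= 2 * p /\ p <= 3 ^ Z.of_nat n.
Proof.
  destruct (M2pow_gen_a n) as (p & q & Hpow & Hp & Hq & Hpell & Hlo & _ & Hhi).
  exists p, q. split; [|lia].
  unfold slope_word. rewrite Hpow. unfold M2mul, gen_b. cbn [m11 m12 m21 m22].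
  f_equal; ring.
Qed.

Lemma slope_word_trace_gt_2 n : 2 < Z.abs (M2trace (slope_word n)).
Proof.
  destruct (slope_word_entries n) as (p & q & -> & Hp & _).
  unfold M2trace. cbn [m11 m22]. lia.
Qed.

Lemma slope_word_offdiag_divisor n u :
  (u | m12 (slope_word n)) -> (u | m21 (slope_word n)) -> Z.abs u <= 2.
Proof.
  destruct (slope_word_entries n) as (p & q & -> & _ & _ & Hpell & _).
  cbn [m12 m21]. intros [x Hx] [y Hy].
  assert (H4 : (2 * q - p) * (2 * q - p) - 5 * (- p * - p) = -4) by nia.
  rewrite Hx, Hy in H4.
  assert (Hdiv : (u * u | 4)) by (exists (5 * (y * y) - x * x); lia).
  pose proof (Z.divide_pos_le (u * u) 4 ltac:(lia) Hdiv).
  nia.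
Qed.

Lemma gamma_rep_slope_word n G : gamma_rep n G -> PSLeq G (slope_word n).
Proof.
  intros [[HG _] (k & Hk & Hpow)].
  apply (PSLeq_pow_root G _ k HG Hk Hpow).
  - apply slope_word_trace_gt_2.
  - apply slope_word_offdiag_divisor.
Qed.

Close Scope Z_scope.

Lemma tlen_slope_rep_bounds n G : inSL2Z G -> PSLeq G (slope_word n) ->
  (INR n - 1) * ln 4 <= tlen G <= ln 27 + INR n * ln 9.
Proof.
  intros HG HW.
  destruct (slope_word_entries n) as (p & q & HWe & Hp & Hq & Hpell & Hlo & Hhi).
  destruct (PSLeq_sign _ _ HW) as (s & Hs & E11 & E12 & E21 & E22).
  rewrite HWe in E11, E12, E21, E22. cbn [m11 m12 m21 m22] in E11, E12, E21, E22.
  assert (Htr : (M2trace G * M2trace G = 9 * (p * p))%Z).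
  { unfold M2trace. rewrite E11, E22. nia. }
  assert (Hnorm : (M2norm2 G <= 27 * (p * p))%Z).
  { unfold M2norm2. rewrite E11, E12, E21, E22. nia. }
  assert (Hlo4 : (4 ^ Z.of_nat n <= 9 * (p * p))%Z).
  { change 4%Z with (2 * 2)%Z. rewrite Z.pow_mul_l. nia. }
  assert (Hhi9 : (p * p <= 9 ^ Z.of_nat n)%Z).
  { change 9%Z with (3 * 3)%Z. rewrite Z.pow_mul_l. nia. }
  assert (Htr_sq : IZR (M2trace G) ^ 2 = 9 * (IZR p * IZR p)).
  { rewrite <- !mult_IZR, <- Htr. simpl. rewrite mult_IZR. ring. }
  pose proof (IZR_le _ _ Hnorm) as Hnorm_R. rewrite !mult_IZR in Hnorm_R.
  pose proof (IZR_le _ _ Hlo4) as Hlo4_R. rewrite <- pow_IZR, !mult_IZR in Hlo4_R.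
  pose proof (IZR_le _ _ Hhi9) as Hhi9_R. rewrite <- pow_IZR, !mult_IZR in Hhi9_R.
  pose proof (IZR_le _ _ Hp) as Hp_R.
  pose proof (IZR_le _ _ (M2norm2_ge_2 G HG)) as Hnorm2.
  destruct (tlen_bounds G HG) as [Hlen_lo Hlen_hi]; [rewrite Htr_sq; nra|].
  split.
  - replace ((INR n - 1) * ln 4) with (ln (4 ^ n / 4))
      by (rewrite ln_div, ln_pow by (try apply pow_lt; lra); ring).
    eapply Rle_trans; [| exact Hlen_lo].
    apply ln_le; [apply Rdiv_lt_0_compat; [apply pow_lt|]; lra|].
    rewrite Htr_sq. lra.
  - replace (ln 27 + INR n * ln 9) with (ln (27 * 9 ^ n))
      by (rewrite ln_mult, ln_pow by (try apply pow_lt; lra); ring).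
    eapply Rle_trans; [exact Hlen_hi |].
    apply ln_le; lra.
Qed.

Lemma tlen_gamma_rep_bounds n G : gamma_rep n G ->
  (INR n - 1) * ln 4 <= tlen G <= ln 27 + INR n * ln 9.
Proof.
  intro Hrep. apply tlen_slope_rep_bounds.
  - apply Hrep.
  - apply gamma_rep_slope_word, Hrep.
Qed.

Lemma total_length_bounds (g : nat -> M2) (α β γ : R) :
  (forall m, α * INR m <= tlen (g (S m)) <= β + γ * INR (S m)) ->
  forall n, α * (INR n * (INR n - 1)) / 2 <= total_length g n <=
            β * INR n + γ * (INR n * (INR n + 1)) / 2.
Proof.
  intros Hterm n. induction n as [|n IH]; [cbn; lra|].
  cbn [total_length]. specialize (Hterm n). rewrite S_INR in *. nra.
Qed.

Lemma total_length_asymp_square (g : nat -> M2) (α β γ : R) :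
  0 < α -> 0 <= β -> 0 < γ ->
  (forall m, α * INR m <= tlen (g (S m)) <= β + γ * INR (S m)) ->
  exists A B C D : R, 0 < A /\ 0 < C /\
    forall n, A * INR n ^ 2 + B <= total_length g n /\
              total_length g n <= C * INR n ^ 2 + D.
Proof.
  intros Hα Hβ Hγ Hterm.
  exists (α / 4), (- (α / 4)), (β + γ), (β + γ).
  split; [lra|]. split; [lra|].
  intro n. destruct (total_length_bounds g α β γ Hterm n) as [Hlo Hhi].
  set (x := INR n) in *.
  assert (0 <= α * (x - 1) ^ 2) by (apply Rmult_le_pos; [lra | apply pow2_ge_0]).
  assert (0 <= β * ((x - 1) ^ 2 + x)) by (apply Rmult_le_pos; [lra | pose proof (pos_INR n); nra]).
  assert (0 <= γ * ((x - 1) ^ 2 + x + 1)) by (apply Rmult_le_pos; [lra | pose proof (pos_INR n); nra]).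
  split; lra.
Qed.

Theorem lemma7p2 :
  forall g : nat -> M2,
    (forall n : nat, (1 <= n)%nat -> gamma_rep n (g n)) ->
    exists A B C D : R, 0 < A /\ 0 < C /\
      forall n : nat,
        A * (INR n)^2 + B <= total_length g n /\
        total_length g n <= C * (INR n)^2 + D.
Proof.
  intros g Hg.
  apply (total_length_asymp_square g (ln 4) (ln 27) (ln 9)).
  - apply ln_gt_0. lra.
  - left. apply ln_gt_0. lra.
  - apply ln_gt_0. lra.
  - intro m.
    pose proof (tlen_gamma_rep_bounds (S m) (g (S m)) (Hg (S m) ltac:(lia))) as Hm.
    rewrite S_INR in Hm at 1. lra.
Qed.
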